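(* Let $c$ be a positive integer, $\langle H,M,T\rangle$ an abduction instance with $H=\{h_1,\ldots,h_{|H|}\}$, $r=|Var(T)\setminus H|$ with the variables of $T$ outside $H$ named $x_1,\ldots,x_r$, and \[g_c(\langle H,M,T\rangle)=\langle H\cup\{h_{|H|+1},\ldots,h_c\},\,M,\,T\cup\{x_{r+1}\vee\neg x_{r+1},\ldots,x_c\vee\neg x_c\}\rangle\] with fresh variables $h_{|H|+1},\ldots,h_c,x_{r+1},\ldots,x_c$. If $\preceq$ is an irredundant ordering, then $SOL_\preceq(g_c(\langle H,M,T\rangle))=SOL_\preceq(\langle H,M,T\rangle)$.
   Context: An abduction instance is a triple $\langle H,M,T\rangle$ where $T$ is a propositional theory in 3CNF, $H$ a set of propositional variables, $M$ a set of propositional variables. $SOL(H,M,T)=\{H'\subseteq H\mid H'\cup T\text{ consistent and } H'\cup T\models M\}$. An ordering $\preceq$ is a well-founded preorder on sets of variables; $SOL_\preceq(H,M,T)$ is the set of $H'\in SOL(H,M,T)$ such that no $H''\in SOL(H,M,T)$ satisfies $H''\prec H'$. The ordering is irredundant if $H'\subset H''$ implies $H'\prec H''$. $Var(T)$ is the set of variables occurring in $T$. *)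

From HB Require Import structures.
From mathcomp Require Import all_boot.
From mathcomp Require Import finmap.
Set Implicit Arguments. Unset Strict Implicit. Unset Printing Implicit Defensive.
Local Open Scope fset_scope.

(* Propositional logic over variables of a choiceType V.
   A literal is (x, b): positive literal x if b = true, negative literal ~x if b = false. *)
Definition lit (V : Type) := (V * bool)%type.
Definition clause (V : Type) := seq (lit V).
Definition theory (V : Type) := seq (clause V).

Section Logic.
Variable V : choiceType.

Definition is3CNF (T : theory V) : bool := all (fun C => size C <= 3) T.

Definition vars (T : theory V) : {fset V} :=
  [fset x | x in flatten [seq [seq l.1 | l <- C] | C <- T]].

Definition lit_sat (a : V -> bool) (l : lit V) : bool := a l.1 == l.2.
Definition clause_sat (a : V -> bool) (C : clause V) : bool := has (lit_sat a) C.
Definition theory_sat (a : V -> bool) (T : theory V) : bool := all (clause_sat a) T.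

(* the set of variables S, read as a set of positive atoms, holds under a *)
Definition atoms_sat (a : V -> bool) (S : {fset V}) : Prop := forall x, x \in S -> a x.

Definition consistent (H' : {fset V}) (T : theory V) : Prop :=
  exists a, atoms_sat a H' /\ theory_sat a T.

Definition entails (H' : {fset V}) (T : theory V) (M : {fset V}) : Prop :=
  forall a, atoms_sat a H' -> theory_sat a T -> atoms_sat a M.

Definition SOL (H M : {fset V}) (T : theory V) (H' : {fset V}) : Prop :=
  H' `<=` H /\ consistent H' T /\ entails H' T M.

Definition strict (le : {fset V} -> {fset V} -> Prop) (A B : {fset V}) : Prop :=
  le A B /\ ~ le B A.

Definition ordering (le : {fset V} -> {fset V} -> Prop) : Prop :=
  (forall A, le A A) /\
  (forall A B C, le A B -> le B C -> le A C) /\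
  well_founded (strict le).

Definition irredundant (le : {fset V} -> {fset V} -> Prop) : Prop :=
  forall A B : {fset V}, A `<` B -> strict le A B.

Definition SOL_pref (le : {fset V} -> {fset V} -> Prop)
    (H M : {fset V}) (T : theory V) (H' : {fset V}) : Prop :=
  SOL H M T H' /\ ~ (exists H'', SOL H M T H'' /\ strict le H'' H').

(* padding g_c, with the fresh hypothesis variables hs = h_{|H|+1..c}
   and fresh theory variables xs = x_{r+1..c} *)
Definition pad_hyps (H : {fset V}) (hs : seq V) : {fset V} :=
  H `|` [fset h | h in hs].
Definition pad_theory (T : theory V) (xs : seq V) : theory V :=
  T ++ [seq [:: (x, true); (x, false)] | x <- xs].

End Logic.

From HB Require Import structures.
From mathcomp Require Import all_boot.
From mathcomp Require Import finmap.
Set Implicit Arguments. Unset Strict Implicit. Unset Printing Implicit Defensive.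
Local Open Scope fset_scope.

(* The padding clauses are tautologies and the padding hypotheses occur
   neither in T nor in M.  Hence a padded solution K gives the solution K ∩ H
   of the original instance (an assignment can be switched to true on the
   fresh atoms without affecting T or M), and conversely every original
   solution is a padded one.  Since K ∩ H ⊆ K, irredundancy makes K ∩ H at
   least as preferred as K, so both instances have the same minimal solutions. *)

Section Padding.
Variable V : choiceType.
Implicit Types (a b : V -> bool) (T : theory V) (H K M : {fset V}).

Lemma theory_sat_pad a T xs : theory_sat a (pad_theory T xs) = theory_sat a T.
Proof.
rewrite /theory_sat all_cat [X in _ && X](_ : _ = true) ?andbT //.
by apply/allP => _ /mapP [x _ ->]; rewrite /clause_sat /= /lit_sat /=; case: (a x).
Qed.

Lemma mem_vars T C l : C \in T -> l \in C -> l.1 \in vars T.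
Proof.
move=> CT lC; apply/imfsetP; exists l.1 => //=.
by apply/flattenP; exists [seq l0.1 | l0 <- C]; apply: map_f.
Qed.

Lemma eq_in_theory_sat a b T :
  {in vars T, a =1 b} -> theory_sat a T = theory_sat b T.
Proof.
move=> eq_ab; apply: eq_in_all => C CT; apply: eq_in_has => l lC.
by rewrite /lit_sat eq_ab //; apply: mem_vars lC.
Qed.

Lemma consistent_fsubset K K' T :
  K' `<=` K -> consistent K T -> consistent K' T.
Proof. by move=> /fsubsetP sub [a [Ka Ta]]; exists a; split=> // x /sub /Ka. Qed.

Lemma entails_fsetI K H T M :
  (forall v, v \in K `\` H -> v \notin M /\ v \notin vars T) ->
  entails K T M -> entails (K `&` H) T M.
Proof.
move=> fresh ent b KHb Tb.
pose b' v := (v \in K) || b v.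
have eq_b' v : v \notin K `\` H -> b' v = b v.
  rewrite /b' in_fsetD; case vK: (v \in K); rewrite ?andbT //= negbK => vH.
  by rewrite KHb // in_fsetI vK vH.
have /ent Mb' : atoms_sat b' K by move=> v vK; rewrite /b' vK.
rewrite (@eq_in_theory_sat b' b) in Mb'; last first.
  by move=> v vT; apply: eq_b'; apply/negP => /fresh [_]; rewrite vT.
move=> x xM; rewrite -eq_b'; first exact: Mb'.
by apply/negP => /fresh []; rewrite xM.
Qed.

Lemma SOL_pad H M T hs xs K :
  SOL H M T K -> SOL (pad_hyps H hs) M (pad_theory T xs) K.
Proof.
move=> [sub [[a [Ka Ta]] ent]].
split; first exact: fsubset_trans sub (fsubsetUl _ _).
split; first by exists a; rewrite theory_sat_pad.
by move=> b Kb; rewrite theory_sat_pad; apply: ent.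
Qed.

Lemma SOL_unpad H M T hs xs K :
  (forall v, v \in hs -> v \notin M /\ v \notin vars T) ->
  SOL (pad_hyps H hs) M (pad_theory T xs) K -> SOL H M T (K `&` H).
Proof.
move=> fresh [/fsubsetP sub [cons ent]].
have KDH_hs v : v \in K `\` H -> v \in hs.
  rewrite in_fsetD => /andP [/negbTE vH /sub].
  by rewrite in_fsetU vH => /imfsetP [w /= wh ->].
split; first exact: fsubsetIr.
split.
  apply: consistent_fsubset (fsubsetIl K H) _; case: cons => a [Ka Ta].
  by exists a; rewrite -(theory_sat_pad _ _ xs).
apply: entails_fsetI => [v /KDH_hs /fresh // | b Kb].
by rewrite -(theory_sat_pad _ _ xs); apply: ent.
Qed.

End Padding.

Section IrredundantOrdering.
Variables (V : choiceType) (le : {fset V} -> {fset V} -> Prop).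
Hypotheses (le_ord : ordering le) (le_irr : irredundant le).

Lemma le_fsubset A B : A `<=` B -> le A B.
Proof.
move=> AB; have [le_refl _] := le_ord.
case: (eqVneq A B) => [-> // | neAB].
have ltAB : A `<` B by rewrite fproperEneq neAB AB.
by case: (le_irr ltAB).
Qed.

Lemma le_strict_trans A B C : le A B -> strict le B C -> strict le A C.
Proof.
have [_ [le_trans _]] := le_ord.
move=> AB [BC nCB]; split; first exact: le_trans AB BC.
by move=> CA; apply: nCB; apply: le_trans CA AB.
Qed.

End IrredundantOrdering.

Theorem lemma4 (V : choiceType) (c : nat) (H M : {fset V}) (T : theory V)
    (hs xs : seq V) (le : {fset V} -> {fset V} -> Prop) :
  0 < c ->
  is3CNF T ->
  (* h_{|H|+1}, ..., h_c *)
  size hs = c - #|` H| ->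
  (* x_{r+1}, ..., x_c with r = |Var(T) \ H| *)
  size xs = c - #|` (vars T `\` H)| ->
  (* all new variables are pairwise distinct and fresh *)
  uniq (hs ++ xs) ->
  (forall v, v \in hs ++ xs -> [/\ v \notin H, v \notin M & v \notin vars T]) ->
  ordering le -> irredundant le ->
  forall H' : {fset V},
    SOL_pref le (pad_hyps H hs) M (pad_theory T xs) H' <-> SOL_pref le H M T H'.
Proof.
(* Only the freshness of hs matters. *)
move=> _ _ _ _ _ fresh le_ord le_irr H'.
have fresh_hs v : v \in hs -> v \notin M /\ v \notin vars T.
  by move=> vhs; have [|_ -> ->] // := fresh v; rewrite mem_cat vhs.
split=> [[solH' minH'] | [solH' minH']].
- have H'H : H' `<=` H.
    case: (eqVneq (H' `&` H) H') => [/fsetIidPl // | neH']; exfalso; apply: minH'.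
    exists (H' `&` H); split; first exact: SOL_pad (SOL_unpad fresh_hs solH').
    by apply: le_irr; rewrite fproperEneq neH' fsubsetIl.
  split; first by rewrite -(fsetIidPl H'H); apply: SOL_unpad fresh_hs solH'.
  by move=> [K [solK ltK]]; apply: minH'; exists K; split=> //; apply: SOL_pad.
- split=> [|[K [solK ltK]]]; first exact: SOL_pad.
  apply: minH'; exists (K `&` H); split; first exact: SOL_unpad fresh_hs solK.
  by apply: le_strict_trans ltK => //; apply: le_fsubset => //; apply: fsubsetIl.
Qed.
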